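(* Let $G$ be a connected graph. Define an auxiliary graph $\Gamma$ whose vertex set is $E(G)$, where two distinct edges of $G$ are adjacent in $\Gamma$ if and only if they have the form $vw$ and $vz$ (sharing the endpoint $v$) with $w$ and $z$ non-adjacent in $G$. Let $E_1,\dots,E_k$ be the vertex sets of the connected components of $\Gamma$ (a partition of $E(G)$). Then each $E_i$ is exactly the set of edges of $G$ that belong to bicliques whose corresponding vertices lie in one and the same connected component of $KB_e(G)$, and this gives a bijection between $\{E_1,\dots,E_k\}$ and the connected components of $KB_e(G)$. In particular, $KB_e(G)$ is connected if and only if $k=1$, i.e. $E_1=E(G)$.
   Context: All graphs are finite, simple and undirected. A biclique of a graph $G$ is a maximal (with respect to inclusion) induced subgraph of $G$ that is a complete bipartite graph $K_{p,q}$ with $p,q\ge 1$. The edge-biclique graph $KB_e(G)$ is the graph with one vertex for each biclique of $G$, in which two distinct vertices are adjacent if and only if the corresponding bicliques of $G$ have at least one edge in common. *)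

(* A finite simple graph is a symmetric irreflexive
   relation e on a finType T. *)
From mathcomp Require Import all_boot.
Set Implicit Arguments. Unset Strict Implicit. Unset Printing Implicit Defensive.

Section Defs.
Variables (T : finType) (e : rel T).

Definition graph_connected : bool :=
  [exists x : T, true] && [forall x : T, forall y : T, connect e x y].

Definition edges : {set {set T}} :=
  [set A : {set T} | [exists u : T, exists v : T, e u v && (A == [set u; v])]].

Definition gammaAdj : rel {set T} := fun A B =>
  [&& A \in edges, B \in edges, A != B &
   [exists v : T, exists w : T, exists z : T,
     [&& A == [set v; w], B == [set v; z] & ~~ e w z]]].

Definition gamma_components : {set {set {set T}}} :=
  [set [set B in edges | connect gammaAdj A B] | A in edges].

Definition induces_complete_bipartite (B : {set T}) : bool :=
  [exists X : {set T}, exists Y : {set T},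
    [&& X :|: Y == B, [disjoint X & Y], X != set0, Y != set0,
        [forall x in X, forall x' in X, ~~ e x x'],
        [forall y in Y, forall y' in Y, ~~ e y y'] &
        [forall x in X, forall y in Y, e x y]]].

Definition biclique (B : {set T}) : bool :=
  induces_complete_bipartite B &&
  [forall B' : {set T}, (B \subset B') && induces_complete_bipartite B' ==> (B' == B)].

(* Edges of G belonging to the biclique B (B is an induced subgraph). *)
Definition biclique_edges (B : {set T}) : {set {set T}} :=
  [set A in edges | A \subset B].

Definition kbAdj : rel {set T} := fun B1 B2 =>
  [&& biclique B1, biclique B2, B1 != B2 &
      [exists A in edges, (A \subset B1) && (A \subset B2)]].

Definition kb_components : {set {set {set T}}} :=
  [set [set B' | biclique B' && connect kbAdj B B'] | B in [set B | biclique B]].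

Definition kb_connected : bool :=
  [exists B : {set T}, biclique B] &&
  [forall B1 : {set T}, forall B2 : {set T},
     biclique B1 && biclique B2 ==> connect kbAdj B1 B2].

Definition component_edges (K : {set {set T}}) : {set {set T}} :=
  [set A in edges | [exists B in K, A \in biclique_edges B]].

End Defs.

From mathcomp Require Import all_boot.
Set Implicit Arguments. Unset Strict Implicit. Unset Printing Implicit Defensive.

(* Two edges are Gamma-adjacent when they form an induced path v-w, v-z of
   length two; such a path spans an induced K_{1,2}, so any two Gamma-adjacent
   edges lie in a common biclique.  Conversely, inside an induced complete
   bipartite graph with sides X, Y any two edges xy, x'y' are linked in Gamma
   by xy - xy' - x'y' (the steps use the non-edges yy' and xx').  Hence:
   walking along a path of KB_e(G) (consecutive bicliques share an edge) the
   edges stay in one Gamma-component, and walking along a path of Gamma the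
   edges stay in bicliques of one KB_e-component.  This gives the key identity
   [component_edgesE]: the edges of the bicliques of the KB_e-component of a
   biclique B0 form exactly the Gamma-component of any edge of B0.  The three
   parts of the theorem follow: the Gamma-components are the images of the
   KB_e-components, this map is injective (every biclique contains an edge),
   and therefore KB_e(G) is connected iff Gamma has a single component. *)

Section EdgeComponents.
Variables (T : finType) (e : rel T).
Hypotheses (e_sym : symmetric e) (e_irr : irreflexive e).

Local Notation icb := (induces_complete_bipartite e).

Lemma adj_neq x y : e x y -> x != y.
Proof. by apply: contraTneq => ->; rewrite e_irr. Qed.

Lemma edgesP A : A \in edges e -> exists u u', e u u' /\ A = [set u; u'].
Proof.
rewrite inE => /existsP[u /existsP[u' /andP[h /eqP->]]]; by exists u, u'.
Qed.

Lemma mem_edges x y : e x y -> [set x; y] \in edges e.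
Proof.
move=> h; rewrite inE; apply/existsP; exists x; apply/existsP; exists y.
by rewrite h eqxx.
Qed.

Lemma edges_adj A v w : A \in edges e -> A = [set v; w] -> e v w.
Proof.
move=> /edgesP[u [u' [h ->]]] hA.
have hv : v \in [set u; u'] by rewrite hA set21.
have hw : w \in [set u; u'] by rewrite hA set22.
have hu' : u' \in [set v; w] by rewrite -hA set22.
have hu : u \in [set v; w] by rewrite -hA set21.
move/set2P: hv => [] ?; move/set2P: hw => [] ?; subst => //.
- by move/set2P: hu' => [] ee; move: h; rewrite ee e_irr.
- by rewrite e_sym.
- by move/set2P: hu => [] ee; move: h; rewrite ee e_irr.
Qed.

Lemma gamma_step v w z : e v w -> e v z -> ~~ e w z ->
  connect (gammaAdj e) [set v; w] [set v; z].
Proof.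
move=> hw hz hwz; have [->|nwz] := eqVneq w z; first exact: connect0.
apply: connect1; rewrite /gammaAdj !mem_edges //=.
apply/andP; split.
  apply/eqP => h; have: w \in [set v; z] by rewrite -h set22.
  rewrite in_set2 => /orP[] /eqP ee.
  - by move: hw; rewrite ee e_irr.
  - by move: nwz; rewrite ee eqxx.
apply/existsP; exists v; apply/existsP; exists w; apply/existsP; exists z.
by rewrite !eqxx.
Qed.

Lemma icbP B : icb B -> exists X Y, [/\ B = X :|: Y,
  X != set0, Y != set0,
  (forall x x', x \in X -> x' \in X -> ~~ e x x') /\
  (forall y y', y \in Y -> y' \in Y -> ~~ e y y') &
  (forall x y, x \in X -> y \in Y -> e x y)].
Proof.
case/existsP => X /existsP[Y /and5P[/eqP hB _ hX hY /andP[hXX /andP[hYY hXY]]]].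
exists X, Y; split => //; first split.
- by move=> x x' hx hx'; move/forallP/(_ x): hXX; rewrite hx => /forallP/(_ x'); rewrite hx'.
- by move=> y y' hy hy'; move/forallP/(_ y): hYY; rewrite hy => /forallP/(_ y'); rewrite hy'.
- by move=> x y hx hy; move/forallP/(_ x): hXY; rewrite hx => /forallP/(_ y); rewrite hy.
Qed.

Lemma icb_edge x y : e x y -> icb [set x; y].
Proof.
move=> hxy; apply/existsP; exists [set x]; apply/existsP; exists [set y].
rewrite eqxx /= disjoint_sym disjoints1 in_set1 eq_sym (adj_neq hxy) /=.
rewrite -!card_gt0 !cards1 /=.
apply/and3P; split; apply/forallP => a; apply/implyP; rewrite in_set1 => /eqP->;
  apply/forallP => b; apply/implyP; rewrite in_set1 => /eqP->; by rewrite ?e_irr.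
Qed.

Lemma icb_path3 v w z : e v w -> e v z -> ~~ e w z -> icb [set v; w; z].
Proof.
move=> hw hz hwz; apply/existsP; exists [set v]; apply/existsP; exists [set w; z].
rewrite setUA eqxx /= disjoints1 in_set2 negb_or (adj_neq hw) (adj_neq hz) /=.
rewrite -!card_gt0 cards1 /=.
apply/and4P; split.
- by apply/card_gt0P; exists w; rewrite set21.
- apply/forallP => a; apply/implyP; rewrite in_set1 => /eqP->;
  apply/forallP => b; apply/implyP; rewrite in_set1 => /eqP->; by rewrite e_irr.
- apply/forallP => a; apply/implyP => /set2P[]->;
  apply/forallP => b; apply/implyP => /set2P[]->; by rewrite ?e_irr // e_sym.
- apply/forallP => a; apply/implyP; rewrite in_set1 => /eqP->;
  apply/forallP => b; apply/implyP => /set2P[]->; by [].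
Qed.

Lemma icb_has_edge B : icb B -> exists2 A, A \in edges e & A \subset B.
Proof.
case/icbP => X [Y [hB /set0Pn[x hx] /set0Pn[y hy] _ hXY]].
exists [set x; y]; first exact/mem_edges/hXY.
by apply/subsetP => a /set2P[]->; rewrite hB inE ?hx ?hy ?orbT.
Qed.

(* All edges of an induced complete bipartite subgraph are Gamma-connected:
   xy and x'y' are linked through xy'. *)
Lemma icb_gamma_connect B A A' : icb B -> A \in edges e -> A' \in edges e ->
  A \subset B -> A' \subset B -> connect (gammaAdj e) A A'.
Proof.
case/icbP => X [Y [hB _ _ [hXX hYY] hXY]].
have cross A0 : A0 \in edges e -> A0 \subset B ->
    exists x y, [/\ x \in X, y \in Y & A0 = [set x; y]].
  move=> /edgesP[u [u' [h ->]]] /subsetP s.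
  have := s u (set21 _ _); have := s u' (set22 _ _); rewrite hB !inE.
  case/orP => hu'; case/orP => hu.
  + by move: (hXX _ _ hu hu'); rewrite h.
  + by exists u', u; rewrite setUC.
  + by exists u, u'.
  + by move: (hYY _ _ hu hu'); rewrite h.
move=> hA hA' sA sA'.
have [x [y [hx hy ->]]] := cross _ hA sA.
have [x' [y' [hx' hy' ->]]] := cross _ hA' sA'.
apply: connect_trans (gamma_step (hXY _ _ hx hy) (hXY _ _ hx hy') (hYY _ _ hy hy')) _.
rewrite [[set x; y']]setUC [[set x'; y']]setUC.
by apply: gamma_step; rewrite 1?e_sym; [apply: hXY | apply: hXY | apply: hXX].
Qed.

Lemma biclique_icb B : biclique e B -> icb B.
Proof. by case/andP. Qed.

Lemma biclique_ext S : icb S -> exists2 B, biclique e B & S \subset B.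
Proof.
move=> hS; have [A /maxsetP [hA hmax] sSA] := maxset_exists hS.
exists A => //; rewrite /biclique hA /=; apply/forallP => B'.
by apply/implyP => /andP[s h]; rewrite (hmax _ h s).
Qed.

(* Gamma-adjacent edges lie in a common biclique (extend the induced K_{1,2}). *)
Lemma gamma_common_biclique A B : gammaAdj e A B ->
  exists2 C, biclique e C & (A \subset C) && (B \subset C).
Proof.
case/and4P => hA hB _ /existsP[v /existsP[w /existsP[z /and3P[/eqP eA /eqP eB hwz]]]].
have hw := edges_adj hA eA; have hz := edges_adj hB eB.
have [C hC sC] := biclique_ext (icb_path3 hw hz hwz).
exists C => //; apply/andP; split; apply: subset_trans sC; rewrite ?eA ?eB;
  apply/subsetP => a /set2P[]->; by rewrite !inE eqxx ?orbT.
Qed.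

Lemma kbAdj_sym : symmetric (kbAdj e).
Proof.
suff h B1 B2 : kbAdj e B1 B2 -> kbAdj e B2 B1.
  by move=> B1 B2; apply/idP/idP; apply: h.
move=> /and4P[h1 h2 h3 /existsP[A /andP[hA /andP[s1 s2]]]].
rewrite /kbAdj h1 h2 eq_sym h3 /=; apply/existsP; exists A; by rewrite hA s1 s2.
Qed.

Lemma kb_share B1 B2 A : biclique e B1 -> biclique e B2 -> A \in edges e ->
  A \subset B1 -> A \subset B2 -> connect (kbAdj e) B1 B2.
Proof.
move=> h1 h2 hA s1 s2; have [->|ne] := eqVneq B1 B2; first exact: connect0.
apply: connect1; rewrite /kbAdj h1 h2 ne /=; apply/existsP; exists A.
by rewrite hA s1 s2.
Qed.

Definition kb_class (B0 : {set T}) : {set {set T}} :=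
  [set B' | biclique e B' && connect (kbAdj e) B0 B'].

Lemma kb_class_eq B1 B2 : connect (kbAdj e) B1 B2 -> kb_class B1 = kb_class B2.
Proof.
have kbsym := sym_connect_sym kbAdj_sym.
move=> c12; apply/setP => B; rewrite !inE; apply: andb_id2l => _.
apply/idP/idP => h; last exact: connect_trans c12 h.
by apply: connect_trans h; rewrite kbsym.
Qed.

Lemma kb_path_gamma_connect p : forall B0 A, biclique e B0 -> A \in edges e ->
  A \subset B0 -> path (kbAdj e) B0 p -> forall A', A' \in edges e ->
  A' \subset last B0 p -> connect (gammaAdj e) A A'.
Proof.
elim: p => [|B1 p IH] B0 A hB0 hA sA /=.
  by move=> _ A' hA' sA'; apply: (icb_gamma_connect (biclique_icb hB0)).
case/andP => /and4P[_ hB1 _ /existsP[A1 /andP[hA1 /andP[s0 s1]]]] hp A' hA' sA'.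
apply: connect_trans (icb_gamma_connect (biclique_icb hB0) hA hA1 sA s0) _.
exact: (IH B1 A1 hB1 hA1 s1 hp A' hA' sA').
Qed.

Lemma gamma_path_kb_class p : forall A B0, biclique e B0 -> A \in edges e ->
  A \subset B0 -> path (gammaAdj e) A p ->
  exists2 B', B' \in kb_class B0 & last A p \subset B'.
Proof.
elim: p => [|A1 p IH] A B0 hB0 hA sA /=.
  by move=> _; exists B0; rewrite // inE hB0 connect0.
case/andP => hg hp.
have [C hC /andP[sAC sA1C]] := gamma_common_biclique hg.
have hA1 : A1 \in edges e by case/and4P: hg.
have [B' ] := IH A1 C hC hA1 sA1C hp; rewrite inE => /andP[hB' cB'] sB'.
exists B' => //; rewrite inE hB' /=.
exact: connect_trans (kb_share hB0 hC hA sA sAC) cB'.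
Qed.

Lemma component_edgesE B0 A : biclique e B0 -> A \in edges e -> A \subset B0 ->
  component_edges e (kb_class B0) = [set A' in edges e | connect (gammaAdj e) A A'].
Proof.
move=> hB0 hA sA; apply/setP => A'; rewrite !inE.
apply: andb_id2l => hX; have hA' : A' \in edges e by rewrite inE.
apply/idP/idP.
  case/existsP => B' /andP[]; rewrite !inE => /andP[_ /connectP[p hp ->]].
  case/andP => _ sA'; exact: (kb_path_gamma_connect hB0 hA sA hp hA' sA').
case/connectP => p hp eA'.
have [B' hB' sB'] := gamma_path_kb_class hB0 hA sA hp.
by apply/existsP; exists B'; rewrite hB' !inE hX eA' sB'.
Qed.

Lemma gamma_components_kb :
  gamma_components e = [set component_edges e K | K in kb_components e].
Proof.
apply/setP => S; apply/imsetP/imsetP.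
  case=> A hA ->.
  have [u [u' [huu eA]]] := edgesP hA.
  have [B0 hB0 sA] := biclique_ext (icb_edge huu); rewrite -eA in sA.
  exists (kb_class B0); first by apply/imsetP; exists B0; rewrite ?inE.
  by rewrite (component_edgesE hB0 hA sA).
case=> K /imsetP[B0 hB0 ->] ->; rewrite inE in hB0.
have [A hA sA] := icb_has_edge (biclique_icb hB0).
by exists A => //; rewrite (component_edgesE hB0 hA sA).
Qed.

(* Second part: distinct KB_e-components have distinct edge sets, since an
   edge of a biclique B1 found in a biclique of another component links them. *)
Lemma component_edges_inj : {in kb_components e &, injective (component_edges e)}.
Proof.
move=> K1 K2 /imsetP[B1 hB1 ->] /imsetP[B2 _ ->]; rewrite inE in hB1 => heq.
have [A1 hA1 sA1] := icb_has_edge (biclique_icb hB1).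
have : A1 \in component_edges e (kb_class B1).
  rewrite [A1 \in component_edges _ _]inE hA1 /=; apply/existsP; exists B1.
  by rewrite inE hB1 connect0 /= [A1 \in biclique_edges _ _]inE hA1 sA1.
rewrite heq inE => /andP[_ /existsP[B' /andP[]]].
rewrite !inE => /andP[hB' c2] /andP[_ s'].
apply: kb_class_eq; apply: connect_trans (kb_share hB1 hB' hA1 sA1 s') _.
by rewrite (sym_connect_sym kbAdj_sym).
Qed.

Lemma kb_connectedE : kb_connected e <-> #|kb_components e| = 1.
Proof.
have in_kb B : biclique e B -> kb_class B \in kb_components e.
  by move=> hB; apply/imsetP; exists B; rewrite ?inE.
split.
  case/andP => /existsP[B hB] /forallP hall; apply/eqP/cards1P; exists (kb_class B).
  apply/setP => K; rewrite in_set1; apply/imsetP/eqP; last first.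
    by move=> ->; exists B; rewrite ?inE.
  case=> B1; rewrite inE => hB1 ->; apply: kb_class_eq.
  by move/forallP: (hall B1) => /(_ B) /implyP; apply; rewrite hB1 hB.
move/eqP/cards1P => [K hK].
have : K \in kb_components e by rewrite hK set11.
case/imsetP => B0; rewrite inE => hB0 _.
apply/andP; split; first by apply/existsP; exists B0.
apply/forallP => B1; apply/forallP => B2; apply/implyP => /andP[h1 h2].
have := in_kb _ h1; have := in_kb _ h2; rewrite hK !in_set1 => /eqP k2 /eqP k1.
have : B2 \in kb_class B2 by rewrite inE h2 connect0.
by rewrite k2 -k1 inE => /andP[_ ->].
Qed.

End EdgeComponents.

Theorem mainTheorem3 (T : finType) (e : rel T)
  (e_sym : symmetric e) (e_irr : irreflexive e)
  (G_conn : graph_connected e) :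
  [/\ gamma_components e = [set component_edges e K | K in kb_components e],
      {in kb_components e &, injective (component_edges e)} &
      (kb_connected e <-> #|gamma_components e| = 1)].
Proof.
have gammaE := gamma_components_kb e_sym e_irr.
have inj := @component_edges_inj T e.
split => //.
by rewrite gammaE card_in_imset //; exact: kb_connectedE.
Qed.
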